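(* Admissible semantics (the map $F\mapsto \mathrm{adm}(F)$, the set of admissible sets of $F$) is serialisable with the selection function $\alpha_{adm}(X,Y,Z)=X\cup Y\cup Z$ and the termination function $\beta_{adm}(F,S)=1$ for all $F,S$.
   Context: An abstract argumentation framework (AF) is a pair $F=(A,R)$ with $A$ a finite subset of a fixed universal set of arguments $\mathfrak{A}$ and $R\subseteq A\times A$ ($a\to b$ means $(a,b)\in R$). For $S\subseteq A$: $S^+=\{a\mid \exists b\in S: b\to a\}$, $S^-=\{a\mid\exists b\in S: a\to b\}$; for sets $S,S'$, $S\to S'$ means $S^+\cap S'\neq\emptyset$. $S$ is conflict-free if no $a,b\in S$ with $a\to b$; $S$ defends $b$ if every attacker of $b$ is attacked by some element of $S$; $S$ is admissible if conflict-free and defends all its elements. An initial set is a non-empty admissible set with no non-empty admissible proper subset; $\mathrm{IS}(F)$ is the set of initial sets. An initial set $S$ is unattacked if $S^-=\emptyset$; unchallenged if $S^-\neq\emptyset$ and no $S'\in\mathrm{IS}(F)$ has $S'\to S$; challenged if some $S'\in\mathrm{IS}(F)$ has $S'\to S$. Write $\mathrm{IS}^{u}(F),\mathrm{IS}^{uc}(F),\mathrm{IS}^{c}(F)$ for the sets of unattacked, unchallenged, challenged initial sets. The reduct is $F^S=(A',R\cap(A'\times A'))$ with $A'=A\setminus(S\cup S^+)$. A selection function $\alpha$ maps any three sets $X,Y,Z$ of sets of arguments to a subset $\alpha(X,Y,Z)\subseteq X\cup Y\cup Z$. A termination function $\beta$ maps pairs $(F,S)$ (AF, set of arguments) to $\{0,1\}$.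 A state is a pair $(F,S)$; there is a transition $(F,S)\to(F^{S'},S\cup S')$ whenever $S'\in\alpha(\mathrm{IS}^u(F),\mathrm{IS}^{uc}(F),\mathrm{IS}^c(F))$. Write $(F,S)\leadsto^{\alpha}(F',S')$ if $(F',S')$ is reachable in finitely many (possibly zero) transitions, and $(F,S)\leadsto^{\alpha,\beta}(F',S')$ if moreover $\beta(F',S')=1$. Let $\mathcal{E}^{\alpha,\beta}(F)$ be the set of all $S$ with $(F,\emptyset)\leadsto^{\alpha,\beta}(F',S)$ for some $F'$. A semantics $\sigma$ (assigning to each AF a set $\sigma(F)$ of sets of arguments) is serialisable with $\alpha,\beta$ if $\sigma(F)=\mathcal{E}^{\alpha,\beta}(F)$ for all AFs $F$. *)

From mathcomp Require Import all_boot.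
Set Implicit Arguments. Unset Strict Implicit. Unset Printing Implicit Defensive.

Section AFDefs.
Variable T : finType.

Definition AF := ({set T} * {set (T * T)})%type.
Definition args (F : AF) : {set T} := F.1.
Definition att (F : AF) : {set (T * T)} := F.2.
Definition wf_AF (F : AF) : bool := att F \subset setX (args F) (args F).

Definition splus (F : AF) (S : {set T}) : {set T} :=
  [set a | [exists b in S, (b, a) \in att F]].
Definition sminus (F : AF) (S : {set T}) : {set T} :=
  [set a | [exists b in S, (a, b) \in att F]].
Definition set_attacks (F : AF) (S S' : {set T}) : bool :=
  splus F S :&: S' != set0.

Definition conflict_free (F : AF) (S : {set T}) : bool :=
  [forall a in S, forall b in S, (a, b) \notin att F].
Definition defends (F : AF) (S : {set T}) (b : T) : bool :=
  [forall a, ((a, b) \in att F) ==> [exists c in S, (c, a) \in att F]].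
Definition admissible (F : AF) (S : {set T}) : bool :=
  [&& S \subset args F, conflict_free F S & [forall b in S, defends F S b]].

Definition initial (F : AF) (S : {set T}) : bool :=
  [&& admissible F S, S != set0 &
      [forall S' : {set T}, ((S' \proper S) && (S' != set0)) ==> ~~ admissible F S']].
Definition IS (F : AF) : {set {set T}} := [set S | initial F S].
Definition IS_u (F : AF) : {set {set T}} :=
  [set S in IS F | sminus F S == set0].
Definition IS_uc (F : AF) : {set {set T}} :=
  [set S in IS F | (sminus F S != set0) && ~~ [exists S' in IS F, set_attacks F S' S]].
Definition IS_c (F : AF) : {set {set T}} :=
  [set S in IS F | [exists S' in IS F, set_attacks F S' S]].

Definition reduct (F : AF) (S : {set T}) : AF :=
  let A' := args F :\: (S :|: splus F S) in
  (A', [set p in att F | (p.1 \in A') && (p.2 \in A')]).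

Definition selection := {set {set T}} -> {set {set T}} -> {set {set T}} -> {set {set T}}.
Definition termination := AF -> {set T} -> bool.

Definition step (alpha : selection) (st st' : AF * {set T}) : Prop :=
  exists S', S' \in alpha (IS_u st.1) (IS_uc st.1) (IS_c st.1) /\
             st' = (reduct st.1 S', st.2 :|: S').

Inductive reach (alpha : selection) : AF * {set T} -> AF * {set T} -> Prop :=
| reach_refl st : reach alpha st st
| reach_step st st' st'' : step alpha st st' -> reach alpha st' st'' -> reach alpha st st''.

Definition extensions (alpha : selection) (beta : termination) (F : AF) (S : {set T}) : Prop :=
  exists F', reach alpha (F, set0) (F', S) /\ beta F' S = true.

Definition serialisable (sigma : AF -> {set T} -> bool)
  (alpha : selection) (beta : termination) : Prop :=
  forall F : AF, wf_AF F -> forall S : {set T}, sigma F S = true <-> extensions alpha beta F S.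

Definition alpha_adm : selection := fun X Y Z => X :|: Y :|: Z.
Definition beta_adm : termination := fun _ _ => true.
End AFDefs.

From mathcomp Require Import all_boot.

Set Implicit Arguments. Unset Strict Implicit. Unset Printing Implicit Defensive.

(* Soundness: every reachable state (G, S) satisfies G = F^S with S admissible
   in F, because if S is admissible in F and S' is admissible in F^S, then
   S :|: S' is admissible in F and (F^S)^S' = F^(S :|: S').  Completeness: a
   non-empty admissible set X contains an initial set I (a minimal non-empty
   admissible subset), X :\: I is admissible in F^I, and every initial set is
   selected by alpha_adm, so X is reached by induction on #|X|. *)

Section AdmissibleSerialisation.
Variable T : finType.
Implicit Types (F G : AF T) (S X I : {set T}).

Lemma AF_ext F G : args F = args G -> att F = att G -> F = G.
Proof. by case: F G => [A R] [B Q] /= -> ->. Qed.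

Lemma splusP F S a : reflect (exists2 b, b \in S & (b, a) \in att F) (a \in splus F S).
Proof. by rewrite inE; apply: (iffP exists_inP) => -[b]; exists b. Qed.

Lemma splusU F S S' : splus F (S :|: S') = splus F S :|: splus F S'.
Proof.
apply/setP => a; rewrite in_setU; apply/splusP/orP => [[b]|].
  by case/setUP => bS ba; [left | right]; apply/splusP; exists b.
by case=> /splusP[b bS ba]; exists b; rewrite // inE bS ?orbT.
Qed.

Lemma in_args_reduct F S x :
  (x \in args (reduct F S)) = [&& x \in args F, x \notin S & x \notin splus F S].
Proof. by rewrite /args /= !inE negb_or andbC andbA. Qed.

Lemma in_att_reduct F S a b : ((a, b) \in att (reduct F S)) =
  [&& (a, b) \in att F, a \in args (reduct F S) & b \in args (reduct F S)].
Proof. by rewrite /att /= inE. Qed.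

Lemma reduct_set0 F : wf_AF F -> reduct F set0 = F.
Proof.
move=> /subsetP wfF.
have args0 : args (reduct F set0) = args F.
  apply/setP => x; rewrite in_args_reduct in_set0 /=.
  by case: splusP => [[b]|]; rewrite ?inE ?andbT.
apply: AF_ext => //; apply/setP => -[a b]; rewrite in_att_reduct args0 /=.
by case: (boolP (_ \in _)) => //= /wfF; rewrite inE.
Qed.

Lemma reductU F S S' : S' \subset args (reduct F S) ->
  reduct (reduct F S) S' = reduct F (S :|: S').
Proof.
move=> /subsetP S'args.
have eq_args : args (reduct (reduct F S) S') = args (reduct F (S :|: S')).
  apply/setP => x; rewrite !in_args_reduct splusU !in_setU !negb_or.
  case xA: (x \in args F); case xS: (x \in S); case xSp: (x \in splus F S);
    case xS': (x \in S') => //=; congr negb.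
  apply/splusP/splusP => -[b bS' bx]; exists b => //.
    by move: bx; rewrite in_att_reduct => /andP[].
  by rewrite in_att_reduct bx /= S'args // in_args_reduct xA xS xSp.
have args_sub x : x \in args (reduct F (S :|: S')) -> x \in args (reduct F S).
  by rewrite -eq_args in_args_reduct => /andP[].
apply: AF_ext => //; apply/setP => -[a b]; rewrite !in_att_reduct eq_args.
apply/and3P/and3P => [[/and3P[ab _ _] aG bG] | [ab aG bG]]; split=> //.
by rewrite ab !args_sub.
Qed.

Lemma admP F S : reflect
  [/\ S \subset args F,
      {in S &, forall a b, (a, b) \notin att F} &
      {in S, forall b a, (a, b) \in att F -> exists2 c, c \in S & (c, a) \in att F}]
  (admissible F S).
Proof.
apply: (iffP and3P) => -[SA cfS defS]; split=> //.
- by move=> a b aS bS; move/forall_inP/(_ a aS)/forall_inP: cfS; apply.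
- move=> b bS a ab; move/forall_inP/(_ b bS)/forallP/(_ a)/implyP/(_ ab): defS.
  by case/exists_inP => c; exists c.
- by apply/forall_inP => a aS; apply/forall_inP => b bS; apply: cfS.
- apply/forall_inP => b bS; apply/forallP => a; apply/implyP => ab.
  by have [c cS ca] := defS b bS a ab; apply/exists_inP; exists c.
Qed.

Lemma admissible0 F : admissible F set0.
Proof. by apply/admP; split=> [|a|b]; rewrite ?sub0set ?inE. Qed.

Lemma admissibleU F S S' : wf_AF F -> admissible F S ->
  admissible (reduct F S) S' -> admissible F (S :|: S').
Proof.
move=> /subsetP wfF /admP[SA cfS defS] /admP[/subsetP S'A cfS' defS'].
have S'args x : x \in S' -> [&& x \in args F, x \notin S & x \notin splus F S].
  by move=> xS'; rewrite -in_args_reduct S'A.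
have S'_unattacked b a : b \in S' -> a \in S -> (a, b) \notin att F.
  move=> /S'args /and3P[_ _ /splusP nSb] aS; apply/negP => ab.
  by apply: nSb; exists a.
apply/admP; split.
- by apply/subsetP => x /setUP[/(subsetP SA) | /S'args /and3P[]].
- move=> a b /setUP[aS | aS'] /setUP[bS | bS'].
  + exact: cfS.
  + exact: S'_unattacked.
  + apply/negP => ab; have [c cS ca] := defS b bS a ab.
    by move/negP: (S'_unattacked a c aS' cS).
  + by apply: contra (cfS' a b aS' bS') => ab; rewrite in_att_reduct ab !S'A.
- move=> b /setUP[bS | bS'] a ab.
    by have [c cS ca] := defS b bS a ab; exists c; rewrite ?inE ?cS.
  have [/splusP[c cS ca] | aSp] := boolP (a \in splus F S).
    by exists c; rewrite ?inE ?cS.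
  have aS : a \notin S by apply: contraL ab; apply: S'_unattacked.
  have aG : a \in args (reduct F S).
    by rewrite in_args_reduct aS aSp !andbT; case/setXP: (wfF _ ab).
  have abG : (a, b) \in att (reduct F S) by rewrite in_att_reduct ab aG S'A.
  have [c cS' ca] := defS' b bS' a abG.
  by exists c; rewrite ?inE ?cS' ?orbT //; move: ca; rewrite in_att_reduct => /andP[].
Qed.

Lemma admissible_reductD G X I : admissible G X -> I \subset X ->
  admissible (reduct G I) (X :\: I).
Proof.
move=> /admP[XA cfX defX] /subsetP IX.
have XIargs x : x \in X :\: I -> x \in args (reduct G I).
  case/setDP => xX xI; rewrite in_args_reduct (subsetP XA) //= xI.
  by apply/splusP => -[b bI bx]; move/negP: (cfX b x (IX b bI) xX).
apply/admP; split.
- exact/subsetP.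
- by move=> a b /setDP[aX _] /setDP[bX _]; rewrite in_att_reduct negb_and cfX.
- move=> b /setDP[bX _] a; rewrite in_att_reduct => /and3P[ab aG _].
  have [c cX ca] := defX b bX a ab.
  have cXI : c \in X :\: I.
    rewrite inE cX andbT; apply: contraTN aG => cI.
    by rewrite in_args_reduct; apply/and3P => -[_ _ /splusP[]]; exists c.
  by exists c; rewrite // in_att_reduct ca /= aG XIargs.
Qed.

Lemma initial_subset G X : admissible G X -> X != set0 ->
  exists2 I, initial G I & I \subset X.
Proof.
move=> admX X0.
pose P (Y : {set T}) := [&& Y \subset X, Y != set0 & admissible G Y].
have PX : P X by rewrite /P subxx X0 admX.
case: (arg_minnP (fun Y : {set T} => #|Y|) PX) => I /and3P[IX I0 admI] Imin.
exists I => //; rewrite /initial admI I0; apply/forallP => Y.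
apply/implyP => /andP[YI Y0]; apply: contraTN (proper_card YI) => admY.
by rewrite -leqNgt Imin // /P (subset_trans (proper_sub YI) IX) Y0.
Qed.

Lemma alpha_adm_IS G : alpha_adm (IS_u G) (IS_uc G) (IS_c G) = IS G.
Proof.
apply/setP => I; rewrite /alpha_adm !inE.
by case: (initial G I); case: (_ == set0); case: [exists _ in _, _].
Qed.

Lemma step_adm G S st : step (@alpha_adm T) (G, S) st <->
  exists2 I, initial G I & st = (reduct G I, S :|: I).
Proof.
by rewrite /step alpha_adm_IS; split=> -[I]; [case; rewrite inE | rewrite -inE];
  exists I.
Qed.

Lemma reach_reduct_admissible F st st' : wf_AF F -> reach (@alpha_adm T) st st' ->
  st.1 = reduct F st.2 -> admissible F st.2 ->
  st'.1 = reduct F st'.2 /\ admissible F st'.2.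
Proof.
move=> wfF; elim=> // -[G S] st1 st2 /step_adm[I /and3P[admI _ _] ->] _ IH /= eG admS.
subst G; apply: IH => /=; last exact: admissibleU.
by rewrite reductU //; case/and3P: admI.
Qed.

Lemma reach_admissible G S X : admissible G X ->
  exists G', reach (@alpha_adm T) (G, S) (G', S :|: X).
Proof.
move: {2}#|X| (leqnn #|X|) => n; elim: n G S X => [|n IH] G S X.
  by rewrite leqn0 cards_eq0 => /eqP-> _; exists G; rewrite setU0; constructor.
move=> Xn admX; have [-> | X0] := eqVneq X set0.
  by exists G; rewrite setU0; constructor.
have [I initI IX] := initial_subset admX X0.
have XIn : #|X :\: I| <= n.
  rewrite -ltnS (leq_trans _ Xn) // cardsDS // ltn_subrL !card_gt0 X0 andbT.
  by case/and3P: initI.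
have [G' r] := IH (reduct G I) (S :|: I) _ XIn (admissible_reductD admX IX).
exists G'; rewrite -(setID X I) (setIidPr IX) setUA.
by apply: reach_step r; apply/step_adm; exists I.
Qed.

End AdmissibleSerialisation.

Theorem theorem2 (T : finType) :
  serialisable (@admissible T) (@alpha_adm T) (@beta_adm T).
Proof.
move=> F wfF S; split=> [admS | [F' [r _]]].
  by have [F' r] := reach_admissible set0 admS; exists F'; rewrite set0U in r.
have [_ //] := reach_reduct_admissible wfF r (esym (reduct_set0 wfF)) (admissible0 F).
Qed.
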